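(* Let $(\mathbb{X},d,\mu)$ be a proper, geodesic metric measure space, $\Omega\subset\mathbb{X}$ a bounded domain and $\varrho$ an admissible radius function in $\Omega$. Suppose that for every compact $K\subset\Omega$ a modulus of continuity $\mathcal{W}_{\mu,K}$ is given such that $|\mathcal{M}^nv(x)-\mathcal{M}^nv(y)|\le\|v\|_\infty\mathcal{W}_{\mu,K}(d(x,y))$ for all $v\in L^\infty(\Omega)$, $x,y\in K$, $n\in\mathbb{N}$. Let $|\alpha|\leq1$, $u\in C(\overline\Omega)$, $K\subset\Omega$ compact, and let $\omega$ be a concave modulus of continuity for $u$ on $\widetilde K$. Then for all $x,y\in K$, $$|\mathcal{T}_\alpha u(x)-\mathcal{T}_\alpha u(y)|\leq|\alpha|\,\omega\left(\widehat\omega_\varrho(d(x,y))\right)+(1-\alpha)\|u\|_\infty\mathcal{W}_{\mu,K}(d(x,y)).$$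
   Context: A metric space is proper if closed bounded sets are compact, and geodesic if any two points $x,y$ are joined by a curve of length $d(x,y)$. A metric measure space is a metric space with a positive Borel regular measure $\mu$ with $0<\mu(B)<\infty$ for every ball $B$. An admissible radius function in $\Omega$ is $\varrho\in C(\overline\Omega)$, $\varrho\ge0$, with $0<\varrho(x)\leq\mathrm{dist}(x,\partial\Omega)$ for $x\in\Omega$ and $\varrho=0$ exactly on $\partial\Omega$. $B_x=\overline{B}(x,\varrho(x))$, $\widetilde K=\bigcup_{x\in K}B_x$. For $x\in\Omega$: $\mathcal{M}u(x)=\frac{1}{\mu(B_x)}\int_{B_x}u\,d\mu$, $\mathcal{S}u(x)=\frac12(\sup_{B_x}u+\inf_{B_x}u)$, $\mathcal{T}_\alpha u=\alpha\mathcal{S}u+(1-\alpha)\mathcal{M}u$. A modulus of continuity is a nondecreasing continuous $\omega:[0,\mathrm{diam}\,\Omega]\to[0,\infty)$ with $\omega(0)=0$. Fix a concave modulus of continuity $\omega_{\varrho,\Omega}$ for $\varrho$ on $\Omega$ with $\omega_{\varrho,\Omega}(\mathrm{diam}\,\Omega)\le\mathrm{diam}\,\Omega$; set $\widehat\omega_\varrho(t)=t$ if $\omega_{\varrho,\Omega}(t)\le t$ for all $t\in[0,\mathrm{diam}\,\Omega]$, and otherwise $\widehat\omega_\varrho(t)=\frac{\mathrm{diam}\,\Omega}{\omega_{\varrho,\Omega}(\mathrm{diam}\,\Omega)}\omega_{\varrho,\Omega}(t)$. *)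

From HB Require Import structures.
From mathcomp Require Import all_boot all_order all_algebra.
From mathcomp Require Import all_classical all_reals all_analysis.
Set Implicit Arguments. Unset Strict Implicit. Unset Printing Implicit Defensive.
Import Order.TTheory GRing.Theory Num.Theory.
Local Open Scope classical_set_scope.
Local Open Scope ring_scope.

Section MetricDefs.
Context {R : realType} {X : Type} (dist : X -> X -> R).

Definition is_metric : Prop :=
  (forall x y, 0 <= dist x y) /\ (forall x y, dist x y = 0 <-> x = y) /\
  (forall x y, dist x y = dist y x) /\
  (forall x y z, dist x z <= dist x y + dist y z).

Definition oball (x : X) (r : R) : set X := [set y | dist x y < r].
Definition cball (x : X) (r : R) : set X := [set y | dist x y <= r].

Definition mopen (A : set X) : Prop :=
  forall x, A x -> exists2 r : R, 0 < r & oball x r `<=` A.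
Definition mclosed (A : set X) : Prop := mopen (~` A).

Definition mcompact (K : set X) : Prop :=
  forall (I : Type) (F : I -> set X), (forall i, mopen (F i)) ->
    K `<=` \bigcup_i F i ->
    exists2 D : set I, finite_set D & K `<=` \bigcup_(i in D) F i.

Definition mbounded (A : set X) : Prop :=
  exists (x : X) (r : R), A `<=` cball x r.

Definition mproper : Prop :=
  forall A, mclosed A -> mbounded A -> mcompact A.

Definition curve_continuous (g : R -> X) (a b : R) : Prop :=
  forall t, a <= t <= b -> forall e : R, 0 < e -> exists2 del : R, 0 < del &
    forall s, a <= s <= b -> `|s - t| < del -> dist (g s) (g t) < e.

Definition curve_length (g : R -> X) (a b : R) : \bar R :=
  ereal_sup [set (\sum_(i < (size s).-1) dist (g (nth 0 s i)) (g (nth 0 s i.+1)))%:E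
            | s in [set s : seq R | sorted <=%R s /\ all (fun t => a <= t <= b) s]].

Definition mgeodesic : Prop :=
  forall x y, exists (a b : R) (g : R -> X),
    [/\ a <= b, g a = x, g b = y, curve_continuous g a b &
        curve_length g a b = (dist x y)%:E].

Definition mconnected (A : set X) : Prop :=
  forall U V, mopen U -> mopen V -> A `<=` U `|` V -> A `&` U `&` V = set0 ->
    A `&` U = set0 \/ A `&` V = set0.

Definition mdomain (O : set X) : Prop :=
  [/\ O !=set0, mopen O & mconnected O].

Definition mclosure (A : set X) : set X :=
  [set x | forall r : R, 0 < r -> exists2 y, A y & dist x y < r].

Definition mboundary (A : set X) : set X := mclosure A `&` mclosure (~` A).

Definition mdiam (A : set X) : R := sup [set dist x y | x in A & y in A].

Definition cont_on (A : set X) (f : X -> R) : Prop :=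
  forall x, A x -> forall e : R, 0 < e -> exists2 del : R, 0 < del &
    forall y, A y -> dist x y < del -> `|f x - f y| < e.

Definition admissible_radius (O : set X) (rho : X -> R) : Prop :=
  [/\ cont_on (mclosure O) rho,
      (forall x, mclosure O x -> 0 <= rho x),
      (forall x, O x -> 0 < rho x /\ forall z, mboundary O z -> rho x <= dist x z) &
      (forall x, mclosure O x -> (rho x = 0 <-> mboundary O x))].

Definition modulus (O : set X) (w : R -> R) : Prop :=
  [/\ (forall s t, 0 <= s -> s <= t -> t <= mdiam O -> w s <= w t),
      (forall t, 0 <= t <= mdiam O -> forall e : R, 0 < e -> exists2 del : R, 0 < del &
         forall s, 0 <= s <= mdiam O -> `|s - t| < del -> `|w s - w t| < e),
      w 0 = 0 & (forall t, 0 <= t <= mdiam O -> 0 <= w t)].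

Definition concave_on (O : set X) (w : R -> R) : Prop :=
  forall s t l : R, 0 <= s <= mdiam O -> 0 <= t <= mdiam O -> 0 <= l <= 1 ->
    l * w s + (1 - l) * w t <= w (l * s + (1 - l) * t).

Definition modulus_for (O : set X) (w : R -> R) (f : X -> R) (A : set X) : Prop :=
  modulus O w /\ forall x y, A x -> A y -> `|f x - f y| <= w (dist x y).

Definition Bx (rho : X -> R) (x : X) : set X := cball x (rho x).

Definition Ktilde (rho : X -> R) (K : set X) : set X := \bigcup_(x in K) Bx rho x.

Definition omega_hat (O : set X) (wr : R -> R) (t : R) : R :=
  if `[< forall s, 0 <= s <= mdiam O -> wr s <= s >] then t
  else mdiam O / wr (mdiam O) * wr t.
End MetricDefs.

Section MeasDefs.
Context {R : realType} {dsp : measure_display} {X : measurableType dsp}.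
Context (dist : X -> X -> R) (mu : {measure set X -> \bar R}).

Definition borel_sets : Prop :=
  (@measurable _ X) = <<s [set A | mopen dist A] >>.

(* averaging operator: for x in O the mean over B_x; outside O (in particular
   on the boundary, where B_x = {x}) it is the value itself *)
Definition Mop (O : set X) (rho : X -> R) (v : X -> R) (x : X) : R :=
  if `[< O x >] then
    fine (\int[mu]_(y in Bx dist rho x) (v y)%:E) / fine (mu (Bx dist rho x))
  else v x.

Definition Sop (rho : X -> R) (u : X -> R) (x : X) : R :=
  (sup [set u y | y in Bx dist rho x] + inf [set u y | y in Bx dist rho x]) / 2.

Definition Top (O : set X) (rho : X -> R) (alpha : R) (u : X -> R) (x : X) : R :=
  alpha * Sop rho u x + (1 - alpha) * Mop O rho u x.

Definition linf_norm (A : set X) (v : X -> R) : \bar R :=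
  ereal_inf [set M : \bar R | mu (A `&` [set x | (M < (`|v x|)%:E)%E]) = 0%E].

Definition Linf (A : set X) (v : X -> R) : Prop :=
  measurable_fun A v /\ (linf_norm A v < +oo)%E.
End MeasDefs.

From HB Require Import structures.
From mathcomp Require Import all_boot all_order all_algebra.
From mathcomp Require Import all_classical all_reals all_analysis.
From mathcomp Require Import lra ring.
Import Order.TTheory GRing.Theory Num.Theory.
Local Open Scope classical_set_scope.
Local Open Scope ring_scope.
Set Implicit Arguments. Unset Strict Implicit. Unset Printing Implicit Defensive.

(* The averaging part is the hypothesis on [W] for [n = 0] applied to [u], which
   is essentially bounded because the closure of [Omega] is compact.  For the
   midrange part, a geodesic moves any [z] of [B_y] into [B_x] at cost at most
   [max 0 (d x y + rho y - rho x)].  Comparing sups and infs of [u] over the two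
   balls, the midranges differ by at most the mean of [omega] at the two costs;
   concavity bounds this by [omega] of the mean cost, which is at most
   [hat omega_rho (d x y)] because [|rho x - rho y| <= omega_rho (d x y)].
   Geodesy also keeps every ball inside the closure of [Omega], where distances
   stay in [0, diam Omega], the range on which the moduli are controlled. *)

Section Metric.
Context {R : realType} {X : Type} {d : X -> X -> R}.
Hypothesis Hm : is_metric d.

Lemma mdist_ge0 x y : 0 <= d x y. Proof. by case: Hm. Qed.
Lemma mdistxx x : d x x = 0. Proof. by case: Hm => _ [H _]; apply: (proj2 (H x x)). Qed.
Lemma mdist_eq0 x y : d x y = 0 -> x = y. Proof. by case: Hm => _ [H _]; apply: (proj1 (H x y)). Qed.
Lemma mdistC x y : d x y = d y x. Proof. by case: Hm => _ [_ []]. Qed.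
Lemma mdist_triangle x y z : d x z <= d x y + d y z. Proof. by case: Hm => _ [_ [_]]. Qed.

Lemma mopen_ball_union (S : X -> R -> Prop) :
  mopen d [set z | exists x r, S x r /\ d x z < r].
Proof.
move=> z [x [r [Sxr dxz]]]; exists (r - d x z); first by rewrite subr_gt0.
move=> w dzw; exists x, r; split => //.
by have := mdist_triangle x z w; rewrite /oball /= in dzw; lra.
Qed.

Lemma mclosure_sub A : A `<=` mclosure d A.
Proof. by move=> x Ax r r0; exists x => //; rewrite mdistxx. Qed.

Lemma mclosure_approx A w :
  (forall e, 0 < e -> exists2 p, mclosure d A p & d w p < e) -> mclosure d A w.
Proof.
move=> H r r0; have [p Ap dwp] := H (r / 2) ltac:(lra).
have [q Aq dpq] := Ap (r / 2) ltac:(lra).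
by exists q => //; have := mdist_triangle w p q; lra.
Qed.

Lemma mclosed_mclosure A : mclosed d (mclosure d A).
Proof.
move=> x /= nAx.
have [r r0 hr] : exists2 r : R, 0 < r & forall y, A y -> r <= d x y.
  apply: contra_notP nAx => H r r0; apply: contra_notP H => H.
  by exists r => // y Ay; rewrite leNgt; apply/negP => hy; apply: H; exists y.
exists (r / 2) => [|z dxz Az]; first lra.
have [y Ay dzy] := Az (r / 2) ltac:(lra).
by have := hr y Ay; have := mdist_triangle x z y; rewrite /oball /= in dxz; lra.
Qed.

Lemma mbounded_mclosure A : mbounded d A -> mbounded d (mclosure d A).
Proof.
move=> [x [r hr]]; exists x, (r + 1) => z Az.
have [y Ay dzy] := Az 1 ltr01; have := hr y Ay; rewrite /cball /= => dxy.
by have := mdist_triangle x y z; rewrite (mdistC z y) in dzy; lra.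
Qed.

Lemma mclosure_dist_le_diam A p q : mbounded d A ->
  mclosure d A p -> mclosure d A q -> d p q <= mdiam d A.
Proof.
move=> [x0 [r hr]] Ap Aq.
have ubA : has_ubound [set d x y | x in A & y in A].
  exists (r + r) => _ [x Ax [y Ay <-]].
  have := hr x Ax; have := hr y Ay; rewrite /cball /= => h1 h2.
  by have := mdist_triangle x x0 y; rewrite (mdistC x x0); lra.
apply/ler_addgt0Pr => e e0.
have [p' Ap' dpp'] := Ap (e / 2) ltac:(lra).
have [q' Aq' dqq'] := Aq (e / 2) ltac:(lra).
have : d p' q' <= mdiam d A by apply: ub_le_sup => //; exists p' => //; exists q'.
by have := mdist_triangle p p' q; have := mdist_triangle p' q' q; rewrite (mdistC q' q); lra.
Qed.

Lemma mcompact_cont_on_bounded C u : mcompact d C -> cont_on d C u ->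
  exists M : R, forall x, C x -> `|u x| <= M.
Proof.
move=> cC cu.
pose F (n : nat) :=
  [set z | exists x r, (forall y, C y -> d x y < r -> `|u y| < n%:R) /\ d x z < r].
have cover : C `<=` \bigcup_n F n.
  move=> x Cx; have [r r0 hr] := cu x Cx 1 ltr01.
  have hn := archi_boundP (addr_ge0 (normr_ge0 (u x)) ler01).
  exists (Num.Def.archi_bound (`|u x| + 1)) => //; exists x, r; split; last by rewrite mdistxx.
  move=> y Cy dxy; have := hr y Cy dxy; have := ler_normD (u y - u x) (u x).
  by rewrite subrK distrC; lra.
have oF n : mopen d (F n) by apply: mopen_ball_union.
have [D fD DC] := cC nat F oF cover.
have [s Ds] := (finite_seqP D).1 fD.
exists (\max_(i <- s) i)%:R => z Cz.
have [n Dn [x [r [hr dxz]]]] := DC z Cz.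
have : (n <= \max_(i <- s) i)%N by apply: leq_bigmax_seq => //; rewrite Ds in Dn.
by rewrite -(ler_nat R); have := hr z Cz dxz; lra.
Qed.

End Metric.

Section Measurability.
Context {R : realType} {dsp : measure_display} {X : measurableType dsp}.
Context {d : X -> X -> R} (mu : {measure set X -> \bar R}).
Hypotheses (Hm : is_metric d) (Hborel : borel_sets d).

Lemma mopen_measurable A : mopen d A -> measurable A.
Proof. by move=> oA; rewrite Hborel; apply: sub_sigma_algebra. Qed.

Lemma mclosed_measurable A : mclosed d A -> measurable A.
Proof. by move=> cA; rewrite -(setCK A); apply/measurableC/mopen_measurable. Qed.

Lemma cont_on_measurable C u : mclosed d C -> cont_on d C u -> measurable_fun C u.
Proof.
move=> cC cu; apply: (measurability _ (measurable_realfun.RGenInftyO.measurableE R)).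
move=> _ [_ [r ->] <-].
pose U := [set z | exists x del, (forall y, C y -> d x y < del -> u y < r) /\ d x z < del].
have -> : C `&` u @^-1` `]-oo, r[ = C `&` U.
  apply/seteqP; split => z /= [Cz hz]; split => //.
    rewrite in_itv /= in hz; have [del del0 hdel] := cu z Cz (r - u z) ltac:(lra).
    exists z, del; split; last by rewrite mdistxx.
    move=> y Cy dzy; have := hdel y Cy dzy; have := ler_norm (u y - u z).
    by rewrite distrC; lra.
  by move: hz => [x [del [hr dxz]]]; rewrite in_itv /=; apply: hr.
by apply: measurableI; [exact: mclosed_measurable | exact/mopen_measurable/mopen_ball_union].
Qed.

Lemma linf_norm_le C u M : (forall x, C x -> `|u x| <= M) -> (linf_norm mu C u <= M%:E)%E.
Proof.
move=> uM; apply: ereal_inf_lbound => /=.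
suff -> : C `&` [set x | (M%:E < (`|u x|)%:E)%E] = set0 by exact: measure0.
by apply/seteqP; split => x //= [Cx]; rewrite lte_fin; have := uM x Cx; lra.
Qed.

End Measurability.

Section Geodesic.
Context {R : realType} {X : Type} {d : X -> X -> R}.
Hypotheses (Hm : is_metric d) (Hgeod : mgeodesic d).

Lemma curve_length_ge_split g a b t : a <= t <= b ->
  ((d (g a) (g t) + d (g t) (g b))%:E <= curve_length d g a b)%E.
Proof.
move=> /andP[hat htb]; apply: ereal_sup_ubound; exists [:: a; t; b].
  by split; rewrite /= ?hat ?htb ?lexx ?(le_trans hat htb).
by rewrite /= !big_ord_recr big_ord0 /= add0r.
Qed.

(* The witness is the last time at which the curve lies in the closed set [P]. *)
Lemma curve_crossing g a b (P : X -> Prop) : a <= b -> curve_continuous d g a b ->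
  (forall w, (forall e, 0 < e -> exists2 p, P p & d w p < e) -> P w) ->
  P (g a) -> ~ P (g b) ->
  exists t, [/\ a <= t <= b, P (g t) &
     forall e, 0 < e -> exists2 q, ~ P q & d (g t) q < e].
Proof.
move=> ab gc Pclosed Pa Pb.
pose S := [set t | a <= t <= b /\ P (g t)].
have Sa : S a by split; rewrite ?lexx ?ab.
have supS : has_sup S by split; [exists a | exists b => t [/andP[_ ->]]].
have aS : a <= sup S by apply: ub_le_sup; case: supS.
have Sb : sup S <= b by apply: ge_sup; [exists a | move=> t [/andP[_ ->]]].
have atb : a <= sup S <= b by rewrite aS Sb.
have PS : P (g (sup S)).
  apply: Pclosed => e e0; have [del del0 hd] := gc _ atb e e0.
  have [s [/andP[a_s sb] Ps] hs] := sup_adherent del0 supS.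
  have sS : s <= sup S by apply: ub_le_sup; [case: supS | split; rewrite ?a_s].
  exists (g s) => //; rewrite mdistC //; apply: hd; first by rewrite a_s sb.
  by rewrite ler0_norm ?subr_le0 //; lra.
exists (sup S); split => // e e0.
have Sb' : sup S < b by rewrite lt_neqAle Sb andbT; apply/eqP => Sb'; rewrite -Sb' in Pb.
have [del del0 hd] := gc _ atb e e0.
pose s := Num.min (sup S + del / 2) b.
have [Ss sb sdel] : [/\ sup S < s, s <= b & s - sup S < del].
  by rewrite /s; case: (leP (sup S + del / 2) b) => h; split; lra.
exists (g s).
  move=> Ps; have : s <= sup S by apply: ub_le_sup; [case: supS | split=> //; apply/andP; split; lra].
  lra.
rewrite mdistC //; apply: hd; first by apply/andP; split; lra.
by rewrite ger0_norm; lra.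
Qed.

Lemma geodesic_intermediate_point x z r : 0 <= r -> r < d x z ->
  exists w, d x w <= r /\ d w z <= d x z - r.
Proof.
move=> r0 rz; have [a [b [g [ab ga gb gc gl]]]] := Hgeod x z.
have Pclosed w : (forall e, 0 < e -> exists2 p, d x p <= r & d w p < e) -> d x w <= r.
  move=> H; apply/ler_addgt0Pr => e e0; have [p hp dp] := H e e0.
  by have := mdist_triangle Hm x p w; rewrite (mdistC Hm p w); lra.
have [||t [atb Pt Pbd]] := curve_crossing ab gc Pclosed.
- by rewrite ga mdistxx.
- by rewrite gb; lra.
exists (g t); split => //.
have rle : r <= d x (g t).
  rewrite leNgt; apply/negP => h.
  have [q nq dq] := Pbd (r - d x (g t)) ltac:(lra).
  by apply: nq; have := mdist_triangle Hm x (g t) q; lra.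
by have := curve_length_ge_split g atb; rewrite gl ga gb lee_fin; lra.
Qed.

Lemma geodesic_cball_shift a b r s z : 0 <= r -> d b z <= s ->
  exists2 w, cball d a r w & d z w <= Num.max 0 (d a b + s - r).
Proof.
move=> r0 dbz; case: (leP (d a z) r) => daz.
  by exists z; rewrite // mdistxx // le_max lexx.
have [w [daw dwz]] := geodesic_intermediate_point r0 daz.
exists w => //; rewrite mdistC // le_max; apply/orP; right.
by have := mdist_triangle Hm a b z; lra.
Qed.

(* A geodesic from [x] to a point [y] outside the closure meets the boundary
   at some [g t]; as [rho x <= d x (g t)], its length [d x y <= rho x] forces
   [g t = y]. *)
Lemma admissible_Bx_sub_mclosure O rho x : admissible_radius d O rho -> O x ->
  Bx d rho x `<=` mclosure d O.
Proof.
move=> [_ _ rho_bd _] Ox y dxy; apply: contrapT => Oy.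
have [a [b [g [ab ga gb gc gl]]]] := Hgeod x y.
have [||t [atb Pt Pbd]] := curve_crossing ab gc (mclosure_approx Hm (A := O)).
- by rewrite ga; exact: mclosure_sub.
- by rewrite gb.
have bd : mboundary d O (g t).
  split => // e e0; have [q Oq dq] := Pbd e e0.
  by exists q => // Oq'; apply/Oq/mclosure_sub.
have := (rho_bd x Ox).2 _ bd.
have := curve_length_ge_split g atb; rewrite gl ga gb lee_fin.
rewrite /Bx /cball /= in dxy => len_ge rho_le.
have /(mdist_eq0 Hm) gty : d (g t) y = 0 by apply/eqP; rewrite eq_le mdist_ge0 // andbT; lra.
by apply: Oy; rewrite -gty.
Qed.

End Geodesic.

Lemma affine_comb_dist_le (R : realDomainType) (a s1 s2 m1 m2 : R) : a <= 1 ->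
  `|(a * s1 + (1 - a) * m1) - (a * s2 + (1 - a) * m2)|
    <= `|a| * `|s1 - s2| + (1 - a) * `|m1 - m2|.
Proof.
move=> a1; have -> : a * s1 + (1 - a) * m1 - (a * s2 + (1 - a) * m2) =
                     a * (s1 - s2) + (1 - a) * (m1 - m2) by ring.
by apply: le_trans (ler_normD _ _) _; rewrite !normrM (@ger0_norm _ (1 - a)) ?subr_ge0.
Qed.

Lemma max0_shift_sum_le (R : realDomainType) (t a b v : R) :
  0 <= t -> t <= v -> `|a - b| <= v ->
  Num.max 0 (t + b - a) + Num.max 0 (t + a - b) <= 2 * v.
Proof.
rewrite ler_norml => t0 tv /andP[abv bav].
by case: (leP 0 (t + b - a)); case: (leP 0 (t + a - b)); lra.
Qed.

Section ModuliOnDiameter.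
Context {R : realType} {X : Type} (d : X -> X -> R) (O : set X).
Local Notation D := (mdiam d O).

Lemma concave_on_midpoint w s t : concave_on d O w ->
  0 <= s <= D -> 0 <= t <= D -> (w s + w t) / 2 <= w ((s + t) / 2).
Proof.
move=> conc s_in t_in; have := conc s t (1 / 2) s_in t_in.
have -> : 1 / 2 * s + (1 - 1 / 2) * t = (s + t) / 2 by field.
lra.
Qed.

Lemma concave_modulus_chord w t : modulus d O w -> concave_on d O w ->
  0 < D -> 0 <= t <= D -> t / D * w D <= w t.
Proof.
move=> [_ _ w0 _] conc D0 /andP[t0 tD].
have := conc D 0 (t / D); rewrite w0 !mulr0 !addr0 divfK ?gt_eqF //; apply.
- by rewrite ltW ?lexx.
- by rewrite lexx ltW.
- by rewrite divr_ge0 ?(ltW D0) //= ler_pdivrMr // mul1r.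
Qed.

Lemma omega_hat_bounds wr t : modulus d O wr -> concave_on d O wr -> wr D <= D ->
  0 <= t <= D ->
  [/\ t <= omega_hat d O wr t, wr t <= omega_hat d O wr t & omega_hat d O wr t <= D].
Proof.
move=> wr_mod conc wrD t_in; have [mono _ _ wr_ge0] := wr_mod.
have /andP[t0 tD] := t_in.
rewrite /omega_hat; case: asboolP => [sub_id|]; first by rewrite lexx tD sub_id.
move=> /existsNP[s /not_implyP[/andP[s0 sD] /negP]]; rewrite -ltNge => wrs.
have wrD0 : 0 < wr D by apply: lt_le_trans (mono s D s0 sD (lexx D)); lra.
have D0 : 0 < D by lra.
have c1 : 1 <= D / wr D by rewrite ler_pdivlMr // mul1r.
have wrt0 : 0 <= wr t by apply: wr_ge0.
have wrtD : wr t <= wr D by apply: mono.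
split.
- rewrite {1}(_ : t = D / wr D * (t / D * wr D)).
    by apply: ler_wpM2l; [rewrite divr_ge0 ?ltW | exact: concave_modulus_chord].
  by field; rewrite !gt_eqF.
- by rewrite -[leLHS]mul1r ler_wpM2r.
- by rewrite -[leRHS](divfK (lt0r_neq0 wrD0)) ler_wpM2l // ltW // divr_gt0.
Qed.

End ModuliOnDiameter.

Section Midrange.
Context {R : realType} {X : Type}.

Definition midrange (u : X -> R) (A : set X) : R :=
  (sup [set u y | y in A] + inf [set u y | y in A]) / 2.

Lemma sup_inf_image_shift (u : X -> R) (A B : set X) M c :
  A !=set0 -> B !=set0 -> (forall z, A z -> `|u z| <= M) ->
  (forall z, B z -> exists2 w, A w & `|u z - u w| <= c) ->
  sup [set u y | y in B] <= sup [set u y | y in A] + c /\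
  inf [set u y | y in A] <= inf [set u y | y in B] + c.
Proof.
move=> _ [b Bb] uM shift.
have neB : [set u y | y in B] !=set0 by exists (u b), b.
have [ubA lbA] : has_ubound [set u y | y in A] /\ has_lbound [set u y | y in A].
  by split; [exists M | exists (- M)] => _ [z /uM + <-]; rewrite ler_norml => /andP[].
split.
- apply: ge_sup => // _ [z Bz <-]; have [w Aw uzw] := shift z Bz.
  have : u w <= sup [set u y | y in A] by apply: ub_le_sup => //; exists w.
  by have := ler_norm (u z - u w); lra.
- rewrite -lerBlDr; apply: lb_le_inf => // _ [z Bz <-]; have [w Aw uzw] := shift z Bz.
  have : inf [set u y | y in A] <= u w by apply: ge_inf => //; exists w.
  by have := ler_norm (u w - u z); rewrite distrC; lra.
Qed.

Lemma midrange_dist_le (u : X -> R) (A B : set X) M cA cB :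
  A !=set0 -> B !=set0 ->
  (forall z, A z -> `|u z| <= M) -> (forall z, B z -> `|u z| <= M) ->
  (forall z, B z -> exists2 w, A w & `|u z - u w| <= cA) ->
  (forall z, A z -> exists2 w, B w & `|u z - u w| <= cB) ->
  `|midrange u A - midrange u B| <= (cA + cB) / 2.
Proof.
move=> neA neB uMA uMB BA AB.
have [supB infA] := sup_inf_image_shift neA neB uMA BA.
have [supA infB] := sup_inf_image_shift neB neA uMB AB.
by rewrite /midrange ler_norml; apply/andP; split; lra.
Qed.

End Midrange.

Section MidrangeModulus.
Context {R : realType} {X : Type} {d : X -> X -> R}.
Hypotheses (Hm : is_metric d) (Hgeod : mgeodesic d).
Variables (O : set X) (rho : X -> R) (K : set X).
Hypotheses (Obdd : mbounded d O) (Hrho : admissible_radius d O rho) (KO : K `<=` O).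
Local Notation D := (mdiam d O).

Lemma Bx_shift_modulus u omega a b z : modulus_for d O omega u (Ktilde d rho K) ->
  K a -> K b -> Bx d rho b z ->
  exists2 w, Bx d rho a w &
    `|u z - u w| <= omega (Num.min D (Num.max 0 (d a b + rho b - rho a))).
Proof.
move=> [[mono _ _ _] u_mod] Ka Kb Bz.
have rho_a0 : 0 <= rho a by case: Hrho => _ _ /(_ a (KO Ka)) [/ltW].
have [w Bw dzw] := geodesic_cball_shift Hm Hgeod a rho_a0 Bz.
exists w => //; apply: le_trans (u_mod z w _ _) _; [by exists b | by exists a |].
have Cz := admissible_Bx_sub_mclosure Hm Hgeod Hrho (KO Kb) Bz.
have Cw := admissible_Bx_sub_mclosure Hm Hgeod Hrho (KO Ka) Bw.
apply: mono; first exact: mdist_ge0.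
- by rewrite le_min dzw mclosure_dist_le_diam.
- by rewrite ge_min lexx.
Qed.

Lemma midrange_Bx_modulus wrho u omega M x y :
  modulus_for d O wrho rho O -> concave_on d O wrho -> wrho D <= D ->
  (forall z, mclosure d O z -> `|u z| <= M) ->
  modulus_for d O omega u (Ktilde d rho K) -> concave_on d O omega -> K x -> K y ->
  `|midrange u (Bx d rho x) - midrange u (Bx d rho y)| <= omega (omega_hat d O wrho (d x y)).
Proof.
move=> [wrho_mod rho_mod] wrho_conc wrhoD uM om_mod om_conc Kx Ky.
have [[mono _ _ _] _] := om_mod.
have dxyD : d x y <= D.
  by apply: (mclosure_dist_le_diam Hm Obdd); apply: (mclosure_sub Hm); exact: KO.
have dxy0 := mdist_ge0 Hm x y.
have [dxy_hat wrho_hat hatD] := omega_hat_bounds wrho_mod wrho_conc wrhoD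
  (introT andP (conj dxy0 dxyD)).
set c1 := Num.min D (Num.max 0 (d x y + rho y - rho x)).
set c2 := Num.min D (Num.max 0 (d y x + rho x - rho y)).
have c_in e : 0 <= Num.min D (Num.max 0 e) <= D.
  by rewrite le_min ge_min le_max !lexx (le_trans dxy0 dxyD).
have c12 : (c1 + c2) / 2 <= omega_hat d O wrho (d x y).
  have := max0_shift_sum_le dxy0 dxy_hat (le_trans (rho_mod x y (KO Kx) (KO Ky)) wrho_hat).
  have minD e : Num.min D e <= e by rewrite ge_min lexx orbT.
  rewrite /c1 /c2 (mdistC Hm y x).
  have := minD (Num.max 0 (d x y + rho y - rho x)).
  have := minD (Num.max 0 (d x y + rho x - rho y)).
  lra.
have Bxx z : K z -> Bx d rho z z.
  by move=> Kz; rewrite /Bx /cball /= mdistxx //; case: Hrho => _ _ /(_ z (KO Kz)) [/ltW].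
have uB z : K z -> forall w, Bx d rho z w -> `|u w| <= M.
  by move=> Kz w /(admissible_Bx_sub_mclosure Hm Hgeod Hrho (KO Kz)); apply: uM.
apply: le_trans (midrange_dist_le (M := M) (cA := omega c1) (cB := omega c2) _ _ _ _ _ _) _.
- by exists x; apply: Bxx.
- by exists y; apply: Bxx.
- exact: uB x Kx.
- exact: uB y Ky.
- by move=> z; apply: Bx_shift_modulus.
- by move=> z; apply: Bx_shift_modulus.
apply: le_trans (concave_on_midpoint om_conc (c_in _) (c_in _)) _.
by apply: mono; [rewrite divr_ge0 ?addr_ge0 ?(andP (c_in _)).1 | | ].
Qed.

End MidrangeModulus.

Theorem lemma4p2 (R : realType) (dsp : measure_display) (X : measurableType dsp)
  (dist : X -> X -> R) (mu : {measure set X -> \bar R})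
  (Hmetric : is_metric dist) (Hborel : borel_sets dist)
  (Hproper : mproper dist) (Hgeod : mgeodesic dist)
  (Hballs : forall (x : X) (r : R), 0 < r ->
     (0 < mu (oball dist x r) < +oo)%E /\ (0 < mu (cball dist x r) < +oo)%E)
  (Omega : set X) (HOmega : mdomain dist Omega) (Hbdd : mbounded dist Omega)
  (rho : X -> R) (Hrho : admissible_radius dist Omega rho)
  (wrho : R -> R)
  (Hwrho : modulus_for dist Omega wrho rho Omega /\ concave_on dist Omega wrho /\
           wrho (mdiam dist Omega) <= mdiam dist Omega)
  (W : set X -> R -> R)
  (HW : forall K, mcompact dist K -> K `<=` Omega ->
     modulus dist Omega (W K) /\
     forall (v : X -> R), Linf mu (mclosure dist Omega) v ->
     forall x y, K x -> K y -> forall n : nat,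
       (`|iter n.+1 (Mop dist mu Omega rho) v x - iter n.+1 (Mop dist mu Omega rho) v y|%:E
        <= linf_norm mu (mclosure dist Omega) v * (W K (dist x y))%:E)%E)
  (alpha : R) (Halpha : `|alpha| <= 1)
  (u : X -> R) (Hu : cont_on dist (mclosure dist Omega) u)
  (K : set X) (HK : mcompact dist K) (HKO : K `<=` Omega)
  (omega : R -> R)
  (Homega : modulus_for dist Omega omega u (Ktilde dist rho K) /\ concave_on dist Omega omega) :
  forall x y, K x -> K y ->
    (`|Top dist mu Omega rho alpha u x - Top dist mu Omega rho alpha u y|%:E
     <= (`|alpha| * omega (omega_hat dist Omega wrho (dist x y)))%:E
        + (1 - alpha)%:E * linf_norm mu (mclosure dist Omega) u * (W K (dist x y))%:E)%E.
Proof.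
move=> x y Kx Ky.
have [wrho_for [wrho_conc wrhoD]] := Hwrho.
set C := mclosure dist Omega.
have C_closed : mclosed dist C by apply: mclosed_mclosure.
have C_compact : mcompact dist C := Hproper C C_closed (mbounded_mclosure Hmetric Hbdd).
have [M uM] := mcompact_cont_on_bounded Hmetric C_compact Hu.
have Lu : Linf mu C u.
  split; first exact: (cont_on_measurable Hmetric Hborel C_closed Hu).
  by apply: le_lt_trans (linf_norm_le mu uM) _; exact: ltry.
have Mop_bd := (HW K HK HKO).2 u Lu x y Kx Ky 0%N.
have Sop_bd := midrange_Bx_modulus Hmetric Hgeod Hbdd Hrho HKO
  wrho_for wrho_conc wrhoD uM Homega.1 Homega.2 Kx Ky.
have alpha1 : alpha <= 1 by move: Halpha; rewrite ler_norml => /andP[].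
apply: le_trans (_ : (`|alpha| * `|Sop dist rho u x - Sop dist rho u y| +
  (1 - alpha) * `|Mop dist mu Omega rho u x - Mop dist mu Omega rho u y|)%:E <= _)%E.
  by rewrite lee_fin affine_comb_dist_le.
rewrite EFinD -muleA; apply: leeD; first by rewrite lee_fin ler_wpM2l.
by rewrite EFinM; apply: lee_wpmul2l; [rewrite lee_fin subr_ge0 | exact: Mop_bd].
Qed.
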